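(* Consider an instance of the bicriteria asymmetric traveling salesman problem (bi-ATSP) with tour set $\mathcal{C}$, vector criterion $D=(D_1,D_2)$, outcome set $\mathcal{D}=D(\mathcal{C})$, and $\mathcal{D}_i=D_i(\mathcal{C})$ for $i=1,2$. Suppose that $$P(\mathcal{D}) = \{ (y_1, y_2): y_2 = a - k y_1,\ y_1 \in \mathcal{D}_1,\ y_2 \in \mathcal{D}_2 \},$$ where $a>0$ and $k>0$ are constants. Suppose the 1st criterion $D_1$ is more important than the 2nd criterion $D_2$ with coefficient of relative importance $\theta'\in(0,1)$, and let $\hat{P}(\mathcal{D})$ be the corresponding reduced Pareto set (reduction with $i=1$, $j=2$, $\theta=\theta'$). If $\theta' \geqslant k/(k+1)$, then $\hat{P}(\mathcal{D})$ consists of exactly one element. If $\theta' < k/(k+1)$, then $\hat{P}(\mathcal{D}) = P(\mathcal{D})$.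
   Context: Bi-ATSP: given a complete directed graph $G=(V,E)$ on $n$ vertices, each arc $e\in E$ carries a weight vector $d(e)=(d_1(e),d_2(e))$ of positive numbers. $\mathcal{C}$ is the set of all $(n-1)!$ Hamiltonian circuits (tours) of $G$, and for a tour $C$, $D(C)=(D_1(C),D_2(C))$ with $D_j(C)=\sum_{e\in C} d_j(e)$. For vectors $y^*,y$, write $y^*\leq y$ if $y^*\neq y$ and $y^*_s\leqslant y_s$ for every coordinate $s$ (Pareto relation). For a vector criterion $F$ on $\mathcal{C}$, the set of pareto-optimal tours is $P_F(\mathcal{C})=\{C\in\mathcal{C}: \nexists C^*\in\mathcal{C},\ F(C^* )\leq F(C)\}$. The Pareto set is $P(\mathcal{D})=\{y\in\mathcal{D}: \nexists y^*\in\mathcal{D},\ y^*\leq y\}$. Reduced Pareto set: if criterion $D_i$ is declared more important than criterion $D_j$ ($\{i,j\}=\{1,2\}$) with coefficient of relative importance $\theta\in(0,1)$, define the new criterion $\hat D$ by $\hat D_j=\theta D_i+(1-\theta)D_j$ and $\hat D_i=D_i$, and set $\hat{P}(\mathcal{D})=D(P_{\hat D}(\mathcal{C}))$ (a subset of $P(\mathcal{D})$). *)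

From mathcomp Require Import all_boot all_order all_algebra all_fingroup.
Set Implicit Arguments. Unset Strict Implicit. Unset Printing Implicit Defensive.
Import Order.TTheory GRing.Theory Num.Theory.
Local Open Scope ring_scope.

(* A Hamiltonian circuit is
   encoded by its successor permutation s : the arcs of the tour are
   (i, s i); s is a tour iff it is a single cycle through all vertices. *)
Definition tour (n : nat) (s : {perm 'I_n}) : Prop :=
  forall i : 'I_n, porbit s i = [set: 'I_n].

Definition pos_weights (R : realFieldType) (n : nat)
  (d : 'I_n -> 'I_n -> R * R) : Prop :=
  forall i j : 'I_n, i != j -> 0 < (d i j).1 /\ 0 < (d i j).2.

Definition Dvec (R : realFieldType) (n : nat) (d : 'I_n -> 'I_n -> R * R)
  (s : {perm 'I_n}) : R * R :=
  (\sum_(i : 'I_n) (d i (s i)).1, \sum_(i : 'I_n) (d i (s i)).2).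

Definition pdom (R : realFieldType) (ys y : R * R) : Prop :=
  ys <> y /\ ys.1 <= y.1 /\ ys.2 <= y.2.

Definition pareto_tours (R : realFieldType) (n : nat)
  (F : {perm 'I_n} -> R * R) (C : {perm 'I_n}) : Prop :=
  tour C /\ ~ (exists Cs, tour Cs /\ pdom (F Cs) (F C)).

Definition outcomes (R : realFieldType) (n : nat) (d : 'I_n -> 'I_n -> R * R)
  (y : R * R) : Prop := exists C, tour C /\ Dvec d C = y.
Definition outcomes1 (R : realFieldType) (n : nat) (d : 'I_n -> 'I_n -> R * R)
  (t : R) : Prop := exists C, tour C /\ (Dvec d C).1 = t.
Definition outcomes2 (R : realFieldType) (n : nat) (d : 'I_n -> 'I_n -> R * R)
  (t : R) : Prop := exists C, tour C /\ (Dvec d C).2 = t.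

Definition pareto_set (R : realFieldType) (n : nat) (d : 'I_n -> 'I_n -> R * R)
  (y : R * R) : Prop :=
  outcomes d y /\ ~ (exists ys, outcomes d ys /\ pdom ys y).

Definition Dhat12 (R : realFieldType) (n : nat) (d : 'I_n -> 'I_n -> R * R)
  (th : R) (s : {perm 'I_n}) : R * R :=
  ((Dvec d s).1, th * (Dvec d s).1 + (1 - th) * (Dvec d s).2).

Definition reduced_pareto12 (R : realFieldType) (n : nat)
  (d : 'I_n -> 'I_n -> R * R) (th : R) (y : R * R) : Prop :=
  exists C, pareto_tours (Dhat12 d th) C /\ Dvec d C = y.

(* Dominance in D implies dominance in the reduced criterion, so the reduced
   Pareto set lies in P(D), hence on the line y_2 = a - k y_1.  Along that
   line the second reduced criterion equals (th - (1 - th) k) y_1 + const, and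
   th - (1 - th) k has the sign of th - k/(k+1).  When it is nonnegative, the
   reduced Pareto point with least y_1 dominates all others, which leaves one
   point; when it is negative, every point of P(D) is weakly dominated in the
   reduced criterion by some reduced Pareto point, which must then be equal
   to it since both lie on the line. *)
From mathcomp Require Import all_boot all_order all_algebra all_fingroup.
From mathcomp Require Import boolp ring lra.
Set Implicit Arguments. Unset Strict Implicit. Unset Printing Implicit Defensive.
Import Order.TTheory GRing.Theory Num.Theory.
Local Open Scope ring_scope.

Lemma tour_exists (n : nat) : exists s : {perm 'I_n}, tour s.
Proof.
exists (perm (@ordS_inj n)) => i; apply/setP => j; rewrite inE.
apply/porbitP; exists (j + n - i)%N; apply: val_inj.
have iter_ordS m : val (iter m (@ordS n) i) = ((i + m) %% n)%N.
  elim: m => [|m IHm] /=; first by rewrite addn0 modn_small.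
  by rewrite IHm -[((i + m) %% n).+1]addn1 modnDml addn1 addnS.
rewrite permX (eq_iter (f' := @ordS n)); last by move=> x; rewrite permE.
rewrite iter_ordS addnBA; last exact: leq_trans (ltnW (ltn_ord i)) (leq_addl _ _).
by rewrite addKn modnDr modn_small.
Qed.

Lemma exists_argmin (disp : Order.disp_t) (U : orderType disp) (T : finType)
    (P : T -> Prop) (phi : T -> U) (x0 : T) :
  P x0 -> exists2 y, P y & forall z, P z -> (phi y <= phi z)%O.
Proof.
move=> /asboolP Px0.
case: (@arg_minP _ _ _ _ (fun x => `[< P x >]) phi Px0) => y /asboolP Py min_y.
by exists y => // z /asboolP /min_y.
Qed.

Lemma pdom_sum_lt (R : realFieldType) (ys y : R * R) :
  pdom ys y -> ys.1 + ys.2 < y.1 + y.2.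
Proof.
case: ys y => [p1 p2] [q1 q2] [ne []] /= le1 le2.
have [lt1|ge1] := ltP p1 q1; first lra.
have [lt2|ge2] := ltP p2 q2; first lra.
by case: ne; congr (_, _); apply/eqP; rewrite eq_le ?le1 ?le2.
Qed.

Lemma pareto_tour_below (R : realFieldType) (n : nat)
    (F : {perm 'I_n} -> R * R) (C : {perm 'I_n}) :
  tour C -> exists2 C', pareto_tours F C' &
    (F C').1 <= (F C).1 /\ (F C').2 <= (F C).2.
Proof.
move=> tC.
pose below C' := tour C' /\ (F C').1 <= (F C).1 /\ (F C').2 <= (F C).2.
have [C' [tC' le_C'] min_C'] :=
  @exists_argmin _ _ _ below (fun C' => (F C').1 + (F C').2) C
    (conj tC (conj (lexx _) (lexx _))).
exists C' => //; split=> // -[Cs [tCs dom_Cs]].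
have [_ [le1 le2]] := dom_Cs; have [h1 h2] := le_C'.
have := min_C' Cs (conj tCs (conj (le_trans le1 h1) (le_trans le2 h2))).
by rewrite leNgt (pdom_sum_lt dom_Cs).
Qed.

Definition reduce12 (R : realFieldType) (th : R) (y : R * R) : R * R :=
  (y.1, th * y.1 + (1 - th) * y.2).

Lemma Dhat12E (R : realFieldType) (n : nat) (d : 'I_n -> 'I_n -> R * R)
    (th : R) (s : {perm 'I_n}) :
  Dhat12 d th s = reduce12 th (Dvec d s).
Proof. by []. Qed.

Lemma pdom_reduce12 (R : realFieldType) (th : R) (ys y : R * R) :
  0 <= th -> th < 1 -> pdom ys y -> pdom (reduce12 th ys) (reduce12 th y).
Proof.
move=> th0 th1; case: ys y => [p1 p2] [q1 q2] [ne []] /= le1 le2.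
split; last by split=> //=; nra.
have nz : 1 - th != 0 by rewrite subr_eq0 gt_eqF.
by case=> eq1; rewrite eq1 => /addrI /(mulfI nz) eq2; case: ne; rewrite eq1 eq2.
Qed.

Lemma pareto_set_reduced (R : realFieldType) (n : nat)
    (d : 'I_n -> 'I_n -> R * R) (th : R) (C : {perm 'I_n}) :
  0 <= th -> th < 1 -> pareto_tours (Dhat12 d th) C -> pareto_set d (Dvec d C).
Proof.
move=> th0 th1 [tC nondom]; split; first by exists C.
case=> ys [[Cs [tCs <-]] dom_Cs]; apply: nondom; exists Cs; split=> //.
by rewrite !Dhat12E; apply: pdom_reduce12.
Qed.

Section OnLine.
Variables (R : realFieldType) (a k th : R).
Hypothesis k_gt0 : 0 < k.

Definition on_line (y : R * R) : Prop := y.2 = a - k * y.1.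

Lemma on_line_inj (y z : R * R) :
  on_line y -> on_line z -> y.1 = z.1 -> y = z.
Proof. by case: y z => [y1 y2] [z1 z2]; rewrite /on_line /= => -> -> ->. Qed.

Lemma reduce12_on_line (y : R * R) : on_line y ->
  (reduce12 th y).2 = (th - (1 - th) * k) * y.1 + (1 - th) * a.
Proof. by rewrite /on_line /reduce12 /= => ->; ring. Qed.

Lemma slope_ge0 : (0 <= th - (1 - th) * k) = (k / (k + 1) <= th).
Proof.
have k1 : 0 < k + 1 := addr_gt0 k_gt0 ltr01.
rewrite ler_pdivrMr // -[k <= _]subr_ge0; congr (0 <= _); ring.
Qed.

Lemma reduce12_line_le (y z : R * R) : on_line y -> on_line z ->
  k / (k + 1) <= th -> y.1 <= z.1 -> (reduce12 th y).2 <= (reduce12 th z).2.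
Proof.
move=> ly lz; rewrite -slope_ge0 => s0 le1.
by rewrite !reduce12_on_line // lerD2r ler_wpM2l.
Qed.

Lemma reduce12_line_gt (y z : R * R) : on_line y -> on_line z ->
  th < k / (k + 1) -> y.1 < z.1 -> (reduce12 th z).2 < (reduce12 th y).2.
Proof.
move=> ly lz; rewrite ltNge -slope_ge0 -ltNge => s0 lt1.
by rewrite !reduce12_on_line // ltrD2r ltr_nM2l.
Qed.

Lemma pdom_reduce12_line (y z : R * R) : on_line y -> on_line z ->
  k / (k + 1) <= th -> y.1 < z.1 -> pdom (reduce12 th y) (reduce12 th z).
Proof.
move=> ly lz th_ge lt1; split; first by case=> eq1; rewrite eq1 ltxx in lt1.
by split; [exact: ltW | exact: reduce12_line_le (ltW lt1)].
Qed.

Lemma reduce12_line_eq (y z : R * R) : on_line y -> on_line z ->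
  th < k / (k + 1) -> (reduce12 th y).1 <= (reduce12 th z).1 ->
  (reduce12 th y).2 <= (reduce12 th z).2 -> y = z.
Proof.
move=> ly lz th_lt le1 le2; apply: (on_line_inj ly lz).
apply/eqP; rewrite eq_le le1 leNgt; apply/negP => /(reduce12_line_gt ly lz th_lt).
by rewrite ltNge le2.
Qed.

End OnLine.

Theorem theorem2 (R : realFieldType) (n : nat) (d : 'I_n -> 'I_n -> R * R)
  (a k th : R) :
  (2 <= n)%N -> pos_weights d ->
  0 < a -> 0 < k ->
  (forall y : R * R, pareto_set d y <->
     (y.2 = a - k * y.1 /\ outcomes1 d y.1 /\ outcomes2 d y.2)) ->
  0 < th -> th < 1 ->
  (k / (k + 1) <= th ->
     exists y0 : R * R, forall y, reduced_pareto12 d th y <-> y = y0) /\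
  (th < k / (k + 1) ->
     forall y : R * R, reduced_pareto12 d th y <-> pareto_set d y).
Proof.
move=> _ _ _ k0 paretoE /ltW th0 th1.
have line C : pareto_tours (Dhat12 d th) C -> on_line a k (Dvec d C).
  by move=> /(pareto_set_reduced th0 th1) /paretoE [].
split=> [th_ge | th_lt y].
- have [C0 /(pareto_tour_below (Dhat12 d th)) [C1 pC1 _]] := tour_exists n.
  have [Cm pCm min_Cm] := exists_argmin (fun C => (Dvec d C).1) pC1.
  exists (Dvec d Cm) => y; split=> [[C [pC <-]] | ->]; last by exists Cm.
  have [lC lCm] := (line _ pC, line _ pCm).
  apply: (on_line_inj lC lCm); apply/eqP; rewrite eq_le min_Cm // andbT leNgt.
  apply/negP => lt1; case: pC => _ []; exists Cm; split; first by case: pCm.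
  by rewrite !Dhat12E; exact: (pdom_reduce12_line k0 lCm lC th_ge lt1).
- split=> [[C [pC <-]] | Py]; first exact: pareto_set_reduced th0 th1 pC.
  case: Py ((paretoE _).1 Py) => [[C [tC <-]] _] [lC _].
  have [C' pC' [le1 le2]] := pareto_tour_below (Dhat12 d th) tC.
  by exists C'; split=> //; apply: reduce12_line_eq (line _ pC') lC th_lt le1 le2.
Qed.
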